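(* Let $\mathcal{X}\subseteq\mathbb{R}^d$ be closed convex, $\mathcal{Z}$ a set, $f:\mathcal{X}\times\mathcal{Z}\to\mathbb{R}$ with $f(\cdot,z)$ convex and $L$-Lipschitz for all $z$, and $S=(z_1,\dots,z_n)\in\mathcal{Z}^n$ with $F_S(x)=\frac1n\sum_{i=1}^nf(x,z_i)$ and minimizer $x^*(S)\in\arg\min_{x\in\mathcal{X}}F_S(x)$. Let $\pi$ be an arbitrary permutation of $[n]$ and run fixed-permutation SGD for $K$ epochs with step size constant within each epoch: from $x^1_1=x^1\in\mathcal{X}$, $x^k_1=x^{k-1}_{n+1}$ for $k\ge2$ and $x^k_{t+1}=\mathsf{Proj}_{\mathcal{X}}(x^k_t-\eta_k\nabla f(x^k_t,z_{\pi(t)}))$ for $t=1,\dots,n$, with $\eta_k>0$; output $\bar x^K=\frac{1}{\sum_{k=1}^K\eta_k}\sum_{k=1}^K\eta_kx^k_1$. Then $$F_S(\bar x^K)-F_S(x^*(S))\le\frac{\|x^1-x^*(S)\|^2}{2n\sum_{k}\eta_k}+\frac{L^2(n+2)}{2}\cdot\frac{\sum_k\eta_k^2}{\sum_k\eta_k}.$$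
   Context: $\|\cdot\|$ is the Euclidean norm and $\mathsf{Proj}_{\mathcal{X}}$ the Euclidean projection; $\nabla f(x,z)$ is a fixed selection of a subgradient of $f(\cdot,z)$ at $x$, assumed to have norm at most $L$ (Lipschitz on an open set containing $\mathcal{X}$). Sums over $k$ range over $k=1,\dots,K$. *)

From HB Require Import structures.
From mathcomp Require Import all_boot all_order all_algebra all_fingroup.
From mathcomp Require Import all_classical all_reals all_analysis.
Set Implicit Arguments. Unset Strict Implicit. Unset Printing Implicit Defensive.
Import Order.TTheory GRing.Theory Num.Theory.
Import numFieldNormedType.Exports.
Local Open Scope classical_set_scope.
Local Open Scope ring_scope.

Section Defs.
Variables (R : realType) (d : nat).
Notation vec := 'rV[R]_d.

Definition dotv (u v : vec) : R := \sum_(i < d) u 0 i * v 0 i.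
Definition enorm (u : vec) : R := Num.sqrt (dotv u u).

Definition convex_on (X : set vec) (h : vec -> R) : Prop :=
  forall x y t, X x -> X y -> 0 <= t <= 1 ->
    h ((1 - t) *: x + t *: y) <= (1 - t) * h x + t * h y.

Definition is_proj (X : set vec) (y p : vec) : Prop :=
  X p /\ forall x, X x -> enorm (y - p) <= enorm (y - x).

Definition emp_risk (Z : Type) (n : nat) (f : vec -> Z -> R) (z : 'I_n -> Z)
  (x : vec) : R := n%:R^-1 * \sum_(i < n) f x (z i).

Definition sgd_epoch (Z : Type) (n : nat) (proj : vec -> vec)
  (g : vec -> Z -> vec) (z : 'I_n -> Z) (pi : 'S_n) (et : R) (x : vec) : vec :=
  foldl (fun x t => proj (x - et *: g x (z (pi t)))) x (enum 'I_n).

(* sgd_start ... k = x^{k+1}_1 : start of epoch k+1 (x^1_1 = x1),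
   step sizes eta indexed from 1 (eta k = eta_k). *)
Fixpoint sgd_start (Z : Type) (n : nat) (proj : vec -> vec)
  (g : vec -> Z -> vec) (z : 'I_n -> Z) (pi : 'S_n) (eta : nat -> R)
  (x1 : vec) (k : nat) : vec :=
  match k with
  | 0 => x1
  | k'.+1 => sgd_epoch proj g z pi (eta k) (sgd_start proj g z pi eta x1 k')
  end.

Definition sgd_avg (Z : Type) (n : nat) (proj : vec -> vec)
  (g : vec -> Z -> vec) (z : 'I_n -> Z) (pi : 'S_n) (eta : nat -> R)
  (x1 : vec) (K : nat) : vec :=
  (\sum_(1 <= k < K.+1) eta k)^-1 *:
    \sum_(1 <= k < K.+1) (eta k *: sgd_start proj g z pi eta x1 k.-1).
End Defs.

From HB Require Import structures.
From mathcomp Require Import all_boot all_order all_algebra all_fingroup.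
From mathcomp Require Import all_classical all_reals all_analysis.
From mathcomp Require Import ring lra.
Import Order.TTheory GRing.Theory Num.Theory.
Import numFieldNormedType.Exports.
Local Open Scope classical_set_scope.
Local Open Scope ring_scope.
Set Implicit Arguments. Unset Strict Implicit.

(* A projected subgradient step moves the iterate by at most [eta L], and
   non-expansiveness of the projection together with the subgradient inequality
   makes it decrease [||x - x⋆||^2] by [2 eta (f(x_t, z) - f(x⋆, z))] up to
   [eta^2 L^2].  Replacing [f(x_t, z)] by [f(x^k_1, z)] costs
   [2 eta L ||x_t - x^k_1|| <= 2 eta^2 L^2 (t - 1)], so along an epoch these
   errors add up to [eta^2 L^2 n^2]:
     [||x^{k+1}_1 - x⋆||^2
        <= ||x^k_1 - x⋆||^2 - 2 n eta_k (F_S(x^k_1) - F_S(x⋆)) + eta_k^2 L^2 n^2].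
   Telescoping over the epochs and Jensen's inequality for the eta-weighted
   average give the bound, even with [L^2 n / 2] in place of [L^2 (n + 2) / 2]. *)

Section Euclidean.
Variables (R : realType) (d : nat).
Implicit Types (u v w : 'rV[R]_d) (a : R).

Lemma dotvC u v : dotv u v = dotv v u.
Proof. by apply: eq_bigr => i _; rewrite mulrC. Qed.

Lemma dotvDr u v w : dotv u (v + w) = dotv u v + dotv u w.
Proof. by rewrite /dotv -big_split; apply: eq_bigr => i _; rewrite mxE mulrDr. Qed.

Lemma dotvZr a u v : dotv u (a *: v) = a * dotv u v.
Proof. by rewrite /dotv mulr_sumr; apply: eq_bigr => i _; rewrite mxE mulrCA. Qed.

Lemma dotv0r u : dotv u 0 = 0.
Proof. by rewrite -(scale0r (0 : 'rV[R]_d)) dotvZr mul0r. Qed.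

Lemma dotvNr u v : dotv u (- v) = - dotv u v.
Proof. by rewrite -scaleN1r dotvZr mulN1r. Qed.

Lemma dotvDl u v w : dotv (u + v) w = dotv u w + dotv v w.
Proof. by rewrite dotvC dotvDr !(dotvC w). Qed.

Lemma dotvZl a u v : dotv (a *: u) v = a * dotv u v.
Proof. by rewrite dotvC dotvZr dotvC. Qed.

Lemma dotvNl u v : dotv (- u) v = - dotv u v.
Proof. by rewrite dotvC dotvNr dotvC. Qed.

Lemma dotv_sumr u (I : Type) (r : seq I) (P : pred I) (F : I -> 'rV[R]_d) :
  dotv u (\sum_(i <- r | P i) F i) = \sum_(i <- r | P i) dotv u (F i).
Proof. exact: (big_morph _ (dotvDr u) (dotv0r u)). Qed.

Lemma dotvv_ge0 u : 0 <= dotv u u.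
Proof. by apply: sumr_ge0 => i _; rewrite -expr2 sqr_ge0. Qed.

Lemma dotvv_eq0 u : dotv u u = 0 -> u = 0.
Proof.
move=> /psumr_eq0P u0; apply/rowP => j; rewrite mxE.
by apply/eqP; rewrite -sqrf_eq0 expr2; apply/eqP/u0 => // i _; rewrite -expr2 sqr_ge0.
Qed.

Lemma enorm_ge0 u : 0 <= enorm u.
Proof. exact: sqrtr_ge0. Qed.

Lemma enorm0 : enorm (0 : 'rV[R]_d) = 0.
Proof. by rewrite /enorm dotv0r sqrtr0. Qed.

Lemma enorm_sqr u : enorm u ^+ 2 = dotv u u.
Proof. exact/sqr_sqrtr/dotvv_ge0. Qed.

Lemma ler_enorm_sqr u v : (enorm u <= enorm v) = (enorm u ^+ 2 <= enorm v ^+ 2).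
Proof. by rewrite ler_sqr ?nnegrE ?enorm_ge0. Qed.

Lemma enormN u : enorm (- u) = enorm u.
Proof. by rewrite /enorm dotvNl dotvNr opprK. Qed.

Lemma enormZ a u : enorm (a *: u) = `|a| * enorm u.
Proof. by rewrite /enorm dotvZl dotvZr mulrA -expr2 sqrtrM ?sqr_ge0 // sqrtr_sqr. Qed.

Lemma enormD_sqr u v :
  enorm (u + v) ^+ 2 = enorm u ^+ 2 + 2 * dotv u v + enorm v ^+ 2.
Proof. rewrite !enorm_sqr dotvDl !dotvDr (dotvC v u); ring. Qed.

Lemma enormB_sqr u v :
  enorm (u - v) ^+ 2 = enorm u ^+ 2 - 2 * dotv u v + enorm v ^+ 2.
Proof. by rewrite enormD_sqr enormN dotvNr mulrN. Qed.

Lemma cauchy_schwarz_sqr u v : dotv u v ^+ 2 <= enorm u ^+ 2 * enorm v ^+ 2.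
Proof.
have [->|v_neq0] := eqVneq v 0; first by rewrite dotv0r enorm0 expr0n mulr0.
set b := dotv u v; set c := enorm v ^+ 2.
have c_gt0 : 0 < c.
  rewrite lt_neqAle sqr_ge0 andbT eq_sym /c enorm_sqr.
  by apply: contra_neq v_neq0; apply: dotvv_eq0.
have := sqr_ge0 (enorm (c *: u - b *: v)).
rewrite enormB_sqr !enormZ dotvZl dotvZr !exprMn !real_normK ?num_real // -/b -/c.
have -> : c ^+ 2 * enorm u ^+ 2 - 2 * (c * (b * b)) + b ^+ 2 * c =
  c * (enorm u ^+ 2 * c - b ^+ 2) by ring.
by rewrite pmulr_rge0 // subr_ge0.
Qed.

Lemma cauchy_schwarz u v : dotv u v <= enorm u * enorm v.
Proof.
apply: le_trans (ler_norm _) _.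
rewrite -ler_sqr ?nnegrE ?mulr_ge0 ?enorm_ge0 //.
by rewrite real_normK ?num_real // exprMn cauchy_schwarz_sqr.
Qed.

Lemma enormD u v : enorm (u + v) <= enorm u + enorm v.
Proof.
rewrite -ler_sqr ?nnegrE ?addr_ge0 ?enorm_ge0 // enormD_sqr sqrrD.
have := cauchy_schwarz u v; lra.
Qed.

End Euclidean.

Section Projection.
Variables (R : realType) (d : nat) (X : set 'rV[R]_d).
Hypothesis X_convex : convex_set X.

Lemma convex_set_comb u v a :
  X u -> X v -> 0 <= a -> a <= 1 -> X (a *: u + (1 - a) *: v).
Proof.
move=> Xu Xv a_ge0 a_le1.
by have := @X_convex u v (Itv01 a_ge0 a_le1); rewrite !inE; apply.
Qed.

Lemma is_proj_dotv_le0 y p a :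
  is_proj X y p -> X a -> dotv (y - p) (a - p) <= 0.
Proof.
(* Otherwise moving from [p] towards [a] by [t] would get strictly closer to [y]. *)
move=> [Xp p_min] Xa; rewrite leNgt; apply/negP => c_gt0.
set c := dotv (y - p) (a - p) in c_gt0; set m := enorm (a - p) ^+ 2.
have cm_gt0 : 0 < c + m by rewrite ltr_wpDr ?sqr_ge0.
set t := c / (c + m).
have t_gt0 : 0 < t by rewrite divr_gt0.
have t_le1 : t <= 1 by rewrite ler_pdivrMr // mul1r lerDl sqr_ge0.
have tm_lt_c : t * m < c.
  by rewrite /t mulrAC ltr_pdivrMr // ltr_pM2l // ltrDr.
have := p_min _ (convex_set_comb Xa Xp (ltW t_gt0) t_le1).
have -> : y - (t *: a + (1 - t) *: p) = (y - p) - t *: (a - p).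
  by apply/rowP => i; rewrite !mxE; ring.
rewrite ler_enorm_sqr [leRHS]enormB_sqr dotvZr enormZ exprMn.
rewrite real_normK ?num_real // -/c -/m.
have : t * (t * m - 2 * c) < 0 by rewrite pmulr_rlt0 //; lra.
lra.
Qed.

Lemma enorm_proj_sub_le y p a :
  is_proj X y p -> X a -> enorm (p - a) <= enorm (y - a).
Proof.
move=> py Xa; have obtuse := is_proj_dotv_le0 py Xa.
have -> : y - a = (y - p) - (a - p) by rewrite opprB addrA subrK.
have -> : p - a = - (a - p) by rewrite opprB.
rewrite enormN ler_enorm_sqr [leRHS]enormB_sqr.
have := sqr_ge0 (enorm (y - p)); lra.
Qed.

End Projection.

Section WeightedAverage.
Variables (R : realType) (d : nat) (X : set 'rV[R]_d).
Hypothesis X_convex : convex_set X.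
Variables (I : eqType) (w : I -> R) (p : I -> 'rV[R]_d).

Definition wavg (s : seq I) : 'rV[R]_d :=
  (\sum_(k <- s) w k)^-1 *: \sum_(k <- s) w k *: p k.

Lemma sum_seq_gt0 (s : seq I) : s != [::] -> {in s, forall k, 0 < w k} ->
  0 < \sum_(k <- s) w k.
Proof.
case: s => // k s _ w_gt0; rewrite big_cons ltr_pwDl ?w_gt0 ?mem_head //.
by rewrite big_seq sumr_ge0 // => j js; apply/ltW/w_gt0; rewrite in_cons js orbT.
Qed.

Lemma wavg_in (s : seq I) : s != [::] -> {in s, forall k, 0 < w k} ->
  {in s, forall k, X (p k)} -> X (wavg s).
Proof.
elim: s => // k s IH _ w_gt0 p_in.
have wk_gt0 : 0 < w k by rewrite w_gt0 ?mem_head.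
have Xpk : X (p k) by apply: p_in; rewrite mem_head.
have [->|s_neq0] := eqVneq s [::].
  by rewrite /wavg !big_cons !big_nil !addr0 scalerA mulVf ?gt_eqF // scale1r.
have w_gt0' : {in s, forall j, 0 < w j}.
  by move=> j js; rewrite w_gt0 // in_cons js orbT.
have p_in' : {in s, forall j, X (p j)}.
  by move=> j js; apply: p_in; rewrite in_cons js orbT.
have S_gt0 := sum_seq_gt0 s_neq0 w_gt0'.
set S := \sum_(j <- s) w j in S_gt0.
have -> : wavg (k :: s) =
    (w k / (w k + S)) *: p k + (1 - w k / (w k + S)) *: wavg s.
  rewrite /wavg !big_cons -/S; apply/rowP => i; rewrite !mxE.
  by field; rewrite !gt_eqF ?addr_gt0.
apply: (convex_set_comb X_convex) => //; first exact: IH.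
  by rewrite divr_ge0 ?addr_ge0 ?ltW.
by rewrite ler_pdivrMr ?addr_gt0 // mul1r lerDl ltW.
Qed.

Lemma jensen_wavg (h : 'rV[R]_d -> R) (gh : 'rV[R]_d -> 'rV[R]_d) (s : seq I) :
  (forall x y, X x -> X y -> h x + dotv (gh x) (y - x) <= h y) ->
  s != [::] -> {in s, forall k, 0 < w k} -> {in s, forall k, X (p k)} ->
  (\sum_(k <- s) w k) * h (wavg s) <= \sum_(k <- s) w k * h (p k).
Proof.
move=> gh_subgrad s_neq0 w_gt0 p_in.
have S_gt0 := sum_seq_gt0 s_neq0 w_gt0.
have Xa := wavg_in s_neq0 w_gt0 p_in.
set a := wavg s in Xa *; set S := \sum_(k <- s) w k in S_gt0 *.
have centered : \sum_(k <- s) w k *: (p k - a) = 0.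
  rewrite (eq_bigr _ (fun k _ => scalerBr _ _ _)) sumrB -scaler_suml -/S.
  by rewrite /a /wavg -/S scalerA mulfV ?gt_eqF // scale1r subrr.
have -> : S * h a = \sum_(k <- s) w k * (h a + dotv (gh a) (p k - a)).
  under eq_bigr do rewrite mulrDr.
  rewrite big_split /= -mulr_suml -/S.
  rewrite -[LHS]addr0; congr (_ + _).
  rewrite -[LHS](dotv0r (gh a)) -centered dotv_sumr.
  by apply: eq_bigr => k _; rewrite dotvZr.
rewrite big_seq [leRHS]big_seq; apply: ler_sum => k ks.
by apply: ler_wpM2l; [exact/ltW/w_gt0 | apply: gh_subgrad => //; exact: p_in].
Qed.

End WeightedAverage.

Section ProjectedSubgradient.
Variables (R : realType) (d : nat) (X : set 'rV[R]_d) (Z : Type).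
Variables (f : 'rV[R]_d -> Z -> R) (g : 'rV[R]_d -> Z -> 'rV[R]_d) (L : R).
Variable proj : 'rV[R]_d -> 'rV[R]_d.
Hypothesis X_convex : convex_set X.
Hypothesis proj_spec : forall y, is_proj X y (proj y).
Hypothesis g_subgrad :
  forall zz x y, X x -> X y -> f y zz >= f x zz + dotv (g x zz) (y - x).
Hypothesis g_bound : forall zz x, X x -> enorm (g x zz) <= L.

Definition sgd_step (et : R) (zz : Z) (x : 'rV[R]_d) : 'rV[R]_d :=
  proj (x - et *: g x zz).

Lemma sgd_step_in et zz x : X (sgd_step et zz x).
Proof. exact: (proj_spec _).1. Qed.

Lemma lipschitz_lower_bound zz x x1 : X x -> X x1 ->
  f x1 zz - L * enorm (x - x1) <= f x zz.
Proof.
move=> Xx Xx1; have := g_subgrad zz Xx1 Xx.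
have := cauchy_schwarz (- g x1 zz) (x - x1); rewrite dotvNl enormN.
have := ler_wpM2r (enorm_ge0 (x - x1)) (g_bound zz Xx1).
lra.
Qed.

Lemma enorm_sgd_step_sub et zz x : 0 <= et -> X x ->
  enorm (sgd_step et zz x - x) <= et * L.
Proof.
move=> et_ge0 Xx.
apply: le_trans (enorm_proj_sub_le X_convex (proj_spec _) Xx) _.
rewrite addrAC subrr add0r enormN enormZ ger0_norm //.
exact: ler_wpM2l (g_bound _ Xx).
Qed.

Lemma sgd_step_descent et zz x x1 xs r : 0 <= et -> X x -> X x1 -> X xs ->
  enorm (x - x1) <= r ->
  enorm (sgd_step et zz x - xs) ^+ 2 <= enorm (x - xs) ^+ 2
    - 2 * et * (f x1 zz - f xs zz) + 2 * et * L * r + et ^+ 2 * L ^+ 2.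
Proof.
move=> et_ge0 Xx Xx1 Xxs x_near.
have L_ge0 : 0 <= L := le_trans (enorm_ge0 _) (g_bound zz Xx).
have contract :
    enorm (sgd_step et zz x - xs) ^+ 2 <= enorm (x - xs - et *: g x zz) ^+ 2.
  have := enorm_proj_sub_le X_convex (proj_spec (x - et *: g x zz)) Xxs.
  by rewrite ler_enorm_sqr addrAC.
apply: le_trans contract _.
rewrite [leLHS]enormB_sqr dotvZr enormZ ger0_norm // exprMn.
have g_sqr : enorm (g x zz) ^+ 2 <= L ^+ 2.
  by rewrite ler_sqr ?nnegrE ?enorm_ge0 ?g_bound.
have descent : - dotv (x - xs) (g x zz) <= f xs zz - f x1 zz + L * r.
  have := g_subgrad zz Xx Xxs; rewrite dotvC -dotvNl opprB.
  have := lipschitz_lower_bound zz Xx Xx1; have := ler_wpM2l L_ge0 x_near.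
  lra.
have := ler_wpM2l et_ge0 descent; have := ler_wpM2l (sqr_ge0 et) g_sqr.
lra.
Qed.

Lemma foldl_sgd_step et x1 xs (I : Type) (zs : I -> Z) (s : seq I) x (m : nat) :
  0 <= et -> X x1 -> X xs -> X x -> enorm (x - x1) <= m%:R * et * L ->
  enorm (foldl (fun x t => sgd_step et (zs t) x) x s - xs) ^+ 2
    <= enorm (x - xs) ^+ 2
       - 2 * et * \sum_(t <- s) (f x1 (zs t) - f xs (zs t))
       + et ^+ 2 * L ^+ 2 * ((m + size s)%:R ^+ 2 - m%:R ^+ 2).
Proof.
(* [m] counts the steps already taken from [x1]: this gives the distance bound
   and the [(m + size s)^2 - m^2] term. *)
move=> et_ge0 X1 Xs; elim: s x m => [|t s IH] x m Xx x_near /=.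
  by rewrite big_nil addn0 subrr !mulr0 subr0 addr0.
set x' := sgd_step et (zs t) x.
have x'_near : enorm (x' - x1) <= m.+1%:R * et * L.
  have := enormD (x' - x) (x - x1); rewrite addrA subrK.
  have := enorm_sgd_step_sub (zs t) et_ge0 Xx; rewrite -natr1; lra.
have := IH x' m.+1 (sgd_step_in _ _ _) x'_near.
have := sgd_step_descent (zs t) et_ge0 Xx X1 Xs x_near.
rewrite big_cons -addSnnS !natrD -!natr1.
lra.
Qed.

Variables (n : nat) (z : 'I_n -> Z) (pi : 'S_n).

Lemma mulr_emp_risk x : n%:R * emp_risk f z x = \sum_(i < n) f x (z i).
Proof.
have [n0|n_gt0] := posnP n.
  by move: z; rewrite n0 => z0; rewrite big_ord0 mul0r.
by rewrite /emp_risk mulrA mulfV ?mul1r ?pnatr_eq0 -?lt0n.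
Qed.

Lemma emp_risk_subgrad x y : X x -> X y ->
  emp_risk f z x + dotv (n%:R^-1 *: \sum_(i < n) g x (z i)) (y - x)
    <= emp_risk f z y.
Proof.
move=> Xx Xy; rewrite dotvZl dotvC dotv_sumr /emp_risk -mulrDr -big_split /=.
rewrite ler_wpM2l ?invr_ge0 ?ler0n //; apply: ler_sum => i _.
by rewrite dotvC; apply: g_subgrad.
Qed.

Lemma sgd_epoch_in et x : X x -> X (sgd_epoch proj g z pi et x).
Proof.
rewrite /sgd_epoch; elim: (enum 'I_n) x => //= t s IH x _.
exact/IH/sgd_step_in.
Qed.

Lemma sgd_start_in eta x1 k : X x1 -> X (sgd_start proj g z pi eta x1 k).
Proof. by move=> X1; elim: k => //= k IH; apply: sgd_epoch_in. Qed.

Lemma sgd_epoch_descent et x xs : 0 <= et -> X x -> X xs ->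
  enorm (sgd_epoch proj g z pi et x - xs) ^+ 2
    <= enorm (x - xs) ^+ 2 - 2 * n%:R * et * (emp_risk f z x - emp_risk f z xs)
       + et ^+ 2 * L ^+ 2 * n%:R ^+ 2.
Proof.
move=> et_ge0 Xx Xs.
have := foldl_sgd_step (m := 0) (fun t => z (pi t)) (enum 'I_n) et_ge0 Xx Xs Xx.
rewrite subrr enorm0 !mul0r => /(_ (lexx 0)).
rewrite add0n size_enum_ord expr0n subr0 big_enum /= sumrB.
have perm_sum (F : 'I_n -> R) : \sum_(i in 'I_n) F (pi i) = \sum_(i < n) F i.
  by rewrite [RHS](reindex_inj (@perm_inj _ pi)).
rewrite (perm_sum (fun i => f x (z i))) (perm_sum (fun i => f xs (z i))).
rewrite -!mulr_emp_risk; lra.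
Qed.

Lemma sgd_start_telescope eta x1 xs K : X x1 -> X xs ->
  (forall k, (1 <= k <= K)%N -> 0 <= eta k) ->
  2 * n%:R * \sum_(1 <= k < K.+1)
      eta k * (emp_risk f z (sgd_start proj g z pi eta x1 k.-1) - emp_risk f z xs)
    + enorm (sgd_start proj g z pi eta x1 K - xs) ^+ 2
  <= enorm (x1 - xs) ^+ 2 + L ^+ 2 * n%:R ^+ 2 * \sum_(1 <= k < K.+1) eta k ^+ 2.
Proof.
move=> X1 Xs; elim: K => [_|K IH eta_ge0].
  by rewrite !big_geq // !mulr0 add0r addr0.
have eta_ge0' : forall k, (1 <= k <= K)%N -> 0 <= eta k.
  by move=> k /andP[k_ge1 k_leK]; rewrite eta_ge0 // k_ge1 leqW.
have := IH eta_ge0'.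
have := sgd_epoch_descent (eta_ge0 K.+1 (leqnn _)) (sgd_start_in eta K X1) Xs.
rewrite !(big_nat_recr K.+1) //=; lra.
Qed.

Lemma emp_risk_sgd_avg_le eta x1 xs K : (0 < n)%N -> (0 < K)%N ->
  (forall k, (1 <= k <= K)%N -> 0 < eta k) -> X x1 -> X xs ->
  emp_risk f z (sgd_avg proj g z pi eta x1 K) - emp_risk f z xs <=
    enorm (x1 - xs) ^+ 2 / (2 * n%:R * \sum_(1 <= k < K.+1) eta k)
    + L ^+ 2 * n%:R / 2 *
      ((\sum_(1 <= k < K.+1) eta k ^+ 2) / \sum_(1 <= k < K.+1) eta k).
Proof.
move=> n_gt0 K_gt0 eta_gt0 X1 Xs.
pose s := index_iota 1 K.+1.
have s_neq0 : s != [::] by rewrite -size_eq0 size_iota subSS subn0 -lt0n.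
have w_gt0 : {in s, forall k, 0 < eta k}.
  by move=> k; rewrite mem_index_iota; apply: eta_gt0.
have p_in : {in s, forall k, X (sgd_start proj g z pi eta x1 k.-1)}.
  by move=> k _; apply: sgd_start_in.
have jensen :
    (\sum_(1 <= k < K.+1) eta k) * emp_risk f z (sgd_avg proj g z pi eta x1 K)
    <= \sum_(1 <= k < K.+1) eta k * emp_risk f z (sgd_start proj g z pi eta x1 k.-1)
  := jensen_wavg X_convex emp_risk_subgrad s_neq0 w_gt0 p_in.
have := sgd_start_telescope X1 Xs (fun k k_in => ltW (eta_gt0 k k_in)).
have S_gt0 : 0 < \sum_(1 <= k < K.+1) eta k := sum_seq_gt0 s_neq0 w_gt0.
under eq_bigr do rewrite mulrBr.
rewrite sumrB -mulr_suml.
set S := \sum_(1 <= k < K.+1) eta k in jensen S_gt0 *.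
set Q := \sum_(1 <= k < K.+1) eta k ^+ 2.
have n_pos : 0 < n%:R :> R by rewrite ltr0n.
have := sqr_ge0 (enorm (sgd_start proj g z pi eta x1 K - xs)).
have := ler_wpM2l (mulr_ge0 (ler0n R 2) (ltW n_pos)) jensen.
have -> : enorm (x1 - xs) ^+ 2 / (2 * n%:R * S) + L ^+ 2 * n%:R / 2 * (Q / S)
    = (enorm (x1 - xs) ^+ 2 + L ^+ 2 * n%:R ^+ 2 * Q) / (2 * n%:R * S).
  by field; rewrite !gt_eqF.
rewrite ler_pdivlMr ?mulr_gt0 //.
nra.
Qed.

End ProjectedSubgradient.

Theorem corollaryC2 (R : realType) (d : nat) (X : set 'rV[R]_d) (Z : Type)
  (f : 'rV[R]_d -> Z -> R) (g : 'rV[R]_d -> Z -> 'rV[R]_d) (L : R)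
  (n : nat) (z : 'I_n -> Z) (xstar : 'rV[R]_d)
  (proj : 'rV[R]_d -> 'rV[R]_d) (pi : 'S_n) (K : nat) (eta : nat -> R)
  (x1 : 'rV[R]_d) :
  closed X -> convex_set X ->
  (forall y, is_proj X y (proj y)) ->
  (forall zz, convex_on X (fun x => f x zz)) ->
  (exists U : set 'rV[R]_d, open U /\ X `<=` U /\
     forall zz x y, U x -> U y -> `|f x zz - f y zz| <= L * enorm (x - y)) ->
  (forall zz x y, X x -> X y -> f y zz >= f x zz + dotv (g x zz) (y - x)) ->
  (forall zz x, X x -> enorm (g x zz) <= L) ->
  X xstar -> (forall x, X x -> emp_risk f z xstar <= emp_risk f z x) ->
  X x1 -> (0 < K)%N -> (forall k, (1 <= k <= K)%N -> 0 < eta k) ->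
  emp_risk f z (sgd_avg proj g z pi eta x1 K) - emp_risk f z xstar <=
    enorm (x1 - xstar) ^+ 2 / (2 * n%:R * \sum_(1 <= k < K.+1) eta k)
    + L ^+ 2 * (n%:R + 2) / 2 *
      ((\sum_(1 <= k < K.+1) eta k ^+ 2) / \sum_(1 <= k < K.+1) eta k).
Proof.
(* Closedness of [X], convexity and Lipschitz continuity of [f] enter only
   through the subgradient inequality and the bound on [g]. *)
move=> _ X_convex proj_spec _ _ g_subgrad g_bound Xs _ X1 K_gt0 eta_gt0.
have S_ge0 : 0 <= \sum_(1 <= k < K.+1) eta k.
  by rewrite big_seq; apply: sumr_ge0 => k; rewrite mem_index_iota => /eta_gt0/ltW.
have Q_ge0 : 0 <= \sum_(1 <= k < K.+1) eta k ^+ 2.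
  by rewrite sumr_ge0 // => k _; apply: sqr_ge0.
have [n0|n_gt0] := posnP n.
  (* Both risks vanish, and so does the first term since [x / 0 = 0]. *)
  have n0R : n%:R = 0 :> R by rewrite n0.
  rewrite /emp_risk n0R invr0 !mul0r subrr.
  rewrite mulr0 mul0r invr0 mulr0 !add0r mulfK ?pnatr_eq0 //.
  exact: mulr_ge0 (sqr_ge0 L) (divr_ge0 Q_ge0 S_ge0).
apply: le_trans (emp_risk_sgd_avg_le X_convex proj_spec g_subgrad g_bound z pi
  n_gt0 K_gt0 eta_gt0 X1 Xs) _.
rewrite lerD2l ler_wpM2r ?divr_ge0 // ler_pM2r ?invr_gt0 //.
by apply: ler_wpM2l; [exact: sqr_ge0 | rewrite lerDl].
Qed.
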